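(* Let $N\ge K$ be positive integers and let $F,G\in\mathbb C^{N\times K}$ with $\mathrm{rank}(F)=K$. Then the map $h_{0,F,G}:\mathcal H_K^+\to\mathcal H_K^+$ defined in the context is non-decreasing for the Loewner order: if $Z\le Z'$ in $\mathcal H_K^+$ then $h_{0,F,G}(Z)\le h_{0,F,G}(Z')$.
   Context: $\mathcal H_K^+$ is the cone of $K\times K$ Hermitian positive semidefinite matrices, ordered by $A\le B$ iff $B-A\in\mathcal H_K^+$. $\Pi_F^\perp:=I-F(F^*F)^{-1}F^*$. For $Z\in\mathcal H_K^+$ with positive semidefinite square root $Z^{1/2}$, $$h_{0,F,G}(Z):=G^*F(F^*F)^{-1}Z^{1/2}\big(I+Z^{1/2}(F^*F)^{-1}Z^{1/2}\big)^{-1}Z^{1/2}(F^*F)^{-1}F^*G+G^*\Pi_F^\perp G.$$ For invertible $Z$ this equals $G^*(I+FZ^{-1}F^* )^{-1}G$. *)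

From HB Require Import structures.
From mathcomp Require Import all_boot all_order all_algebra.
From mathcomp Require Import complex.
From mathcomp Require Import boolp reals.
Set Implicit Arguments. Unset Strict Implicit. Unset Printing Implicit Defensive.
Import Order.TTheory GRing.Theory Num.Theory.
Local Open Scope ring_scope.

Definition ctr (C : numClosedFieldType) m n (A : 'M[C]_(m, n)) : 'M[C]_(n, m) :=
  map_mx Num.conj (A^T).

Definition psd (C : numClosedFieldType) n (A : 'M[C]_n) : Prop :=
  ctr A = A /\ forall v : 'rV[C]_n, 0 <= (v *m A *m ctr v) 0 0.

Definition loewner_le (C : numClosedFieldType) n (A B : 'M[C]_n) : Prop :=
  psd (B - A).

(* The positive semidefinite square root Z^{1/2}: the (unique) PSD S with
   S * S = Z when it exists (i.e. when Z is PSD); 0 otherwise. *)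
Definition psd_sqrt (C : numClosedFieldType) n (Z : 'M[C]_n) : 'M[C]_n :=
  match pselect (exists S : 'M[C]_n, psd S /\ S *m S = Z) with
  | left h => proj1_sig (cid h)
  | right _ => 0
  end.

Definition projF_perp (C : numClosedFieldType) N K (F : 'M[C]_(N, K)) : 'M[C]_N :=
  1%:M - F *m invmx (ctr F *m F) *m ctr F.

Definition h0 (C : numClosedFieldType) N K (F G : 'M[C]_(N, K)) (Z : 'M[C]_K)
  : 'M[C]_K :=
  let FFi := invmx (ctr F *m F) in
  let S := psd_sqrt Z in
  ctr G *m F *m FFi *m S *m invmx (1%:M + S *m FFi *m S) *m S *m FFi
    *m ctr F *m G
  + ctr G *m projF_perp F *m G.

From HB Require Import structures.
From mathcomp Require Import all_boot all_order all_algebra.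
From mathcomp Require Import complex spectral.
From mathcomp Require Import boolp reals.
Set Implicit Arguments. Unset Strict Implicit. Unset Printing Implicit Defensive.
Import Order.TTheory GRing.Theory Num.Theory.
Local Open Scope ring_scope.

(** Write B = F^* F and let S = Z^{1/2}.  The Woodbury-type identity
    B^-1 S (I + S B^-1 S)^-1 S B^-1 = B^-1 - (B + S S)^-1
    turns the definition into
    h_{0,F,G}(Z) = (F^* G)^* (B^-1 - (B + Z)^-1) (F^* G) + G^* Pi_F^perp G,
    valid for every PSD Z, since B + Z is then positive definite.
    Monotonicity of h_{0,F,G} is thus the antitonicity of matrix inversion,
    which follows from
    P^-1 - Q^-1 = (P^-1 - Q^-1) P (P^-1 - Q^-1) + Q^-1 (Q - P) Q^-1. *)

Lemma woodbury (R : comUnitRingType) n (B S : 'M[R]_n) :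
  B \in unitmx -> B + S *m S \in unitmx ->
  1%:M + S *m invmx B *m S \in unitmx ->
  invmx B *m S *m invmx (1%:M + S *m invmx B *m S) *m S *m invmx B
    = invmx B - invmx (B + S *m S).
Proof.
set A := invmx B; set T := 1%:M + _; set P := B + _ => uB uP uT.
have PAS : P *m A *m S = S *m T.
  by rewrite mulmxDl mulmxV // mulmxDl mul1mx mulmxDr mulmx1 !mulmxA.
have AS : A *m S = invmx P *m S *m T by rewrite -mulmxA -PAS -!mulmxA mulKmx.
have SS : S *m S = P - B by rewrite addrC addKr.
rewrite AS mulmxK // -(mulmxA _ S S) SS mulmxBr mulVmx // mulmxBl mul1mx.
by rewrite -mulmxA mulmxV // mulmx1.
Qed.

Section PositiveMatrices.
Variable C : numClosedFieldType.

Lemma ctrM m n p (A : 'M[C]_(m, n)) (B : 'M[C]_(n, p)) :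
  ctr (A *m B) = ctr B *m ctr A.
Proof. by rewrite /ctr trmx_mul map_mxM. Qed.

Lemma ctrK m n (A : 'M[C]_(m, n)) : ctr (ctr A) = A.
Proof. exact: trmxCK. Qed.

Lemma ctrD m n (A B : 'M[C]_(m, n)) : ctr (A + B) = ctr A + ctr B.
Proof. by rewrite /ctr linearD map_mxD. Qed.

Lemma ctrB m n (A B : 'M[C]_(m, n)) : ctr (A - B) = ctr A - ctr B.
Proof. by rewrite /ctr linearB map_mxB. Qed.

Lemma ctr1 n : ctr (1%:M : 'M[C]_n) = 1%:M.
Proof. by rewrite /ctr trmx1 map_mx1. Qed.

Lemma ctrV n (A : 'M[C]_n) : ctr (invmx A) = invmx (ctr A).
Proof. by rewrite /ctr trmx_inv map_invmx. Qed.

Lemma mxrank_ctr m n (A : 'M[C]_(m, n)) : \rank (ctr A) = \rank A.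
Proof. by rewrite /ctr mxrank_map mxrank_tr. Qed.

Lemma mulmx_ctr_ge0 n (u : 'rV[C]_n) : 0 <= (u *m ctr u) 0 0.
Proof.
by rewrite mxE; apply: sumr_ge0 => j _; rewrite !mxE mul_conjC_ge0.
Qed.

Lemma mulmx_ctr_eq0 n (u : 'rV[C]_n) : ((u *m ctr u) 0 0 == 0) = (u == 0).
Proof.
apply/eqP/eqP => [|->]; last by rewrite mul0mx mxE.
rewrite mxE (eq_bigr (fun j => u 0 j * (u 0 j)^*)) => [u0|j _]; last first.
  by rewrite !mxE.
apply/rowP => j; rewrite mxE; apply/eqP; rewrite -mul_conjC_eq0.
by apply/eqP/(psumr_eq0P (fun j _ => mul_conjC_ge0 (u 0 j)) u0).
Qed.

Definition qform n (M : 'M[C]_n) (v : 'rV[C]_n) := (v *m M *m ctr v) 0 0.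

Definition posdef n (M : 'M[C]_n) :=
  forall v : 'rV[C]_n, v != 0 -> 0 < qform M v.

Lemma qformD n (M M' : 'M[C]_n) v : qform (M + M') v = qform M v + qform M' v.
Proof. by rewrite /qform mulmxDr mulmxDl mxE. Qed.

Lemma psdD n (A B : 'M[C]_n) : psd A -> psd B -> psd (A + B).
Proof.
move=> [hA qA] [hB qB]; split=> [|v]; first by rewrite ctrD hA hB.
by have := qformD A B v; rewrite /qform => ->; apply: addr_ge0.
Qed.

Lemma psd_congruence m n (D : 'M[C]_m) (X : 'M[C]_(m, n)) :
  psd D -> psd (ctr X *m D *m X).
Proof.
move=> [hD qD]; split=> [|v]; first by rewrite !ctrM ctrK hD mulmxA.
by have := qD (v *m ctr X); rewrite ctrM ctrK !mulmxA.
Qed.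

Lemma psd_invmx n (P : 'M[C]_n) : psd P -> P \in unitmx -> psd (invmx P).
Proof.
move=> hP uP; have hPi : ctr (invmx P) = invmx P by rewrite ctrV hP.1.
by have := psd_congruence (invmx P) hP; rewrite hPi -mulmxA mulmxV ?mulmx1.
Qed.

Lemma qform_gram m n (X : 'M[C]_(m, n)) v :
  qform (ctr X *m X) v = (v *m ctr X *m ctr (v *m ctr X)) 0 0.
Proof. by rewrite /qform ctrM ctrK !mulmxA. Qed.

Lemma psd_gram m n (X : 'M[C]_(m, n)) : psd (ctr X *m X).
Proof.
split=> [|v]; first by rewrite ctrM ctrK.
by have := qform_gram X v; rewrite /qform => ->; apply: mulmx_ctr_ge0.
Qed.

Lemma posdef_gram m n (X : 'M[C]_(m, n)) : \rank X = n -> posdef (ctr X *m X).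
Proof.
move=> rX v vn0; rewrite qform_gram lt_def mulmx_ctr_ge0 mulmx_ctr_eq0 andbT.
by rewrite mulmx_free_eq0 // /row_free mxrank_ctr rX.
Qed.

Lemma posdef1 n : posdef (1%:M : 'M[C]_n).
Proof. by have := @posdef_gram n n 1%:M (mxrank1 _ _); rewrite ctr1 mulmx1. Qed.

Lemma posdefDr n (P Z : 'M[C]_n) : posdef P -> psd Z -> posdef (P + Z).
Proof. by move=> hP [_ hZ] v vn0; rewrite qformD ltr_wpDr ?hZ ?hP. Qed.

Lemma posdef_unitmx n (M : 'M[C]_n) : posdef M -> M \in unitmx.
Proof.
move=> hM; rewrite unitmxE unitfE; apply/negP => /det0P [v vn0 vM].
by have := hM v vn0; rewrite /qform vM mul0mx mxE ltxx.
Qed.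

Lemma psd_diag n (d : 'rV[C]_n) : (forall j, 0 <= d 0 j) -> psd (diag_mx d).
Proof.
move=> d_ge0; split.
  apply/matrixP => i j; rewrite !mxE; case: eqVneq => [->|_].
    by rewrite !mulr1n geC0_conj.
  by rewrite !mulr0n conjC0.
move=> v; rewrite mul_mx_diag mxE; apply: sumr_ge0 => j _; rewrite !mxE.
by rewrite mulrAC mulr_ge0 ?mul_conjC_ge0.
Qed.

Lemma psd_sqrt_exists n (Z : 'M[C]_n) :
  psd Z -> exists S : 'M[C]_n, psd S /\ S *m S = Z.
Proof.
move=> [hZ qZ].
have /orthomx_spectralP : Z \is normalmx.
  by apply/normalmxP; change (Z *m ctr Z = ctr Z *m Z); rewrite hZ.
set P := spectralmx Z; set d := spectral_diag Z.
have Pu : P \is unitarymx := spectral_unitarymx Z.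
have PP : P *m ctr P = 1%:M by apply/unitarymxP.
rewrite invmx_unitary // -/(ctr P) => ZE.
have d_ge0 j : 0 <= d 0 j.
  have := qZ (delta_mx 0 j *m P).
  rewrite ZE ctrM !mulmxA -(mulmxA _ P) PP mulmx1 -(mulmxA _ P) PP mulmx1.
  have -> : ctr (delta_mx 0 j) = delta_mx j 0 :> 'cV[C]_n.
    by apply/matrixP => k l; rewrite !mxE andbC conjC_nat.
  rewrite -(rowE j (diag_mx d)) row_diag_mx -scalemxAl mul_delta_mx.
  by rewrite !mxE !eqxx mulr1.
pose s := \row_j sqrtC (d 0 j).
exists (ctr P *m diag_mx s *m P); split.
  by apply/psd_congruence/psd_diag => j; rewrite mxE sqrtC_ge0.
rewrite ZE !mulmxA -(mulmxA _ P (ctr P)) PP mulmx1 -(mulmxA (ctr P)) mulmx_diag.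
congr (_ *m diag_mx _ *m _); apply/rowP => j.
by rewrite !mxE -expr2 sqrtCK.
Qed.

Lemma psd_sqrtP n (Z : 'M[C]_n) :
  psd Z -> psd (psd_sqrt Z) /\ psd_sqrt Z *m psd_sqrt Z = Z.
Proof.
move=> hZ; rewrite /psd_sqrt; case: pselect => [h|[]].
  exact: (proj2_sig (cid h)).
exact: psd_sqrt_exists.
Qed.

Lemma loewner_le_invmx n (P Q : 'M[C]_n) :
  psd P -> P \in unitmx -> Q \in unitmx -> loewner_le P Q ->
  loewner_le (invmx Q) (invmx P).
Proof.
rewrite /loewner_le => hP uP uQ hQP.
have hQ : ctr Q = Q by rewrite -(subrK P Q) ctrD hQP.1 hP.1.
set iP := invmx P; set iQ := invmx Q.
have hiP : ctr iP = iP by rewrite ctrV hP.1.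
have hiQ : ctr iQ = iQ by rewrite ctrV hQ.
have -> : iP - iQ = ctr (iP - iQ) *m P *m (iP - iQ) + ctr iQ *m (Q - P) *m iQ.
  rewrite ctrB hiP hiQ mulmxBl mulVmx // mulmxBl mul1mx !mulmxBr mulmxBl.
  by rewrite -(mulmxA iQ P) mulmxV // mulmx1 mulVmx // mul1mx subrK.
by apply: psdD; apply: psd_congruence.
Qed.

Section FullColumnRank.
Variables (N K : nat) (F : 'M[C]_(N, K)).
Hypothesis rankF : \rank F = K.

Lemma posdef_gramDr (Z : 'M[C]_K) : psd Z -> posdef (ctr F *m F + Z).
Proof. exact/posdefDr/posdef_gram. Qed.

Lemma h0E (G : 'M[C]_(N, K)) (Z : 'M[C]_K) : psd Z ->
  h0 F G Z = ctr (ctr F *m G) *m (invmx (ctr F *m F) - invmx (ctr F *m F + Z))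
               *m (ctr F *m G) + ctr G *m projF_perp F *m G.
Proof.
move=> hZ; have [hS SS] := psd_sqrtP hZ.
set B := ctr F *m F; set S := psd_sqrt Z.
have hB : psd B := psd_gram F.
have uB : B \in unitmx by apply/posdef_unitmx/posdef_gram.
have uT : 1%:M + S *m invmx B *m S \in unitmx.
  apply/posdef_unitmx/posdefDr; first exact: posdef1.
  by have := psd_congruence S (psd_invmx hB uB); rewrite hS.1.
rewrite -[in RHS]SS -woodbury // ?SS; last exact/posdef_unitmx/posdef_gramDr.
by rewrite ctrM ctrK !mulmxA.
Qed.

Lemma h0_monotone (G : 'M[C]_(N, K)) (Z Z' : 'M[C]_K) :
  psd Z -> psd Z' -> loewner_le Z Z' -> loewner_le (h0 F G Z) (h0 F G Z').
Proof.
move=> hZ hZ' hZZ'; rewrite /loewner_le (h0E G hZ) (h0E G hZ').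
rewrite [X in _ - X]addrC addrKA -mulmxBl -mulmxBr opprB addrC addrA subrK.
apply/psd_congruence/loewner_le_invmx.
- exact: psdD (psd_gram F) hZ.
- exact/posdef_unitmx/posdef_gramDr.
- exact/posdef_unitmx/posdef_gramDr.
- by rewrite /loewner_le [X in X - _]addrC addrKA.
Qed.

End FullColumnRank.

End PositiveMatrices.

Theorem lemma3 (R : realType) (N K : nat) (hK : (0 < K)%N) (hKN : (K <= N)%N)
  (F G : 'M[R[i]]_(N, K)) (hF : \rank F = K) (Z Z' : 'M[R[i]]_K) :
  psd Z -> psd Z' -> loewner_le Z Z' -> loewner_le (h0 F G Z) (h0 F G Z').
Proof. exact: h0_monotone. Qed.
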